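(* Let $k\ge0$ be an integer and let $X_{0,k}\subseteq\{0,1\}^{\mathbb{Z}}$ be the $(0,k)$-RLL system, i.e., the set of binary bi-infinite sequences containing no $k+1$ consecutive zeros. Let $\mu^{\mathsf{u}}$ be the uniform Bernoulli i.i.d. measure on $\{0,1\}^{\mathbb{Z}}$. Then \[R_0(X_{0,k},\{0,1\}^{\mathbb{Z}},\mu^{\mathsf{u}})=\frac{1}{2(2^{k+1}-1)}.\]
   Context: For a shift space $X$, $\mathscr{B}_n(X)$ is the set of length-$n$ words appearing as consecutive subwords of elements of $X$. $d$ is the Hamming distance, $B_r(\overline{x})$ the Hamming ball. For $A,C\subseteq\Sigma^n$, a probability measure $\eta$ on $\Sigma^n$ and $\varepsilon>0$: $R_\varepsilon(C,A,\eta)=\min\{r\in\mathbb{Z}_{\ge0}:\eta(A\cap\bigcup_{\overline{x}\in C}B_r(\overline{x}))\ge1-\varepsilon\}$. For shift spaces $X,Y$ and a shift-invariant ergodic probability measure $\mu$ on $Y$ with marginal $\mu_n$ on coordinates $0,\dots,n-1$: $R_\varepsilon(X,Y,\mu)=\liminf_n\frac1nR_\varepsilon(\mathscr{B}_n(X),\mathscr{B}_n(Y),\mu_n)$ and $R_0(X,Y,\mu)=\lim_{\varepsilon\to0}R_\varepsilon(X,Y,\mu)$. *)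

From HB Require Import structures.
From mathcomp Require Import all_boot all_order all_algebra.
From mathcomp Require Import all_classical all_reals all_analysis.
Set Implicit Arguments. Unset Strict Implicit. Unset Printing Implicit Defensive.
Import Order.TTheory GRing.Theory Num.Theory.
Local Open Scope ring_scope.

Definition bseq := int -> bool.

Definition word (n : nat) := {ffun 'I_n -> bool}.

Definition lang (X : bseq -> Prop) (n : nat) : {set word n} :=
  [set w : word n | `[< exists x : bseq, X x /\
       exists i : int, forall j : 'I_n, w j = x (i + (nat_of_ord j)%:Z) >]].

Definition fullshift : bseq -> Prop := fun _ => True.

Definition rll0k (k : nat) : bseq -> Prop :=
  fun x => forall i : int, exists j : nat, (j <= k)%N /\ x (i + j%:Z) = true.

Definition hamming (n : nat) (u v : word n) : nat :=
  \sum_(i < n) (u i != v i).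

(* a probability measure on Sigma^n is given by its weights *)
Definition wmeas (R : realType) (n : nat) (eta : word n -> R) (S : {set word n}) : R :=
  \sum_(w in S) eta w.

(* R_eps(C, A, eta) = min { r >= 0 : eta(A cap U_{x in C} B_r(x)) >= 1 - eps }.
   Since Hamming distance is <= n, it suffices to search r in 0..n+1;
   [find] returns the least such r (or n+2 if none exists, which only happens
   when the set is empty, i.e. the min is undefined). *)
Definition Reps_fin (R : realType) (n : nat) (eps : R)
    (C A : {set word n}) (eta : word n -> R) : nat :=
  find (fun r : nat =>
          1 - eps <= wmeas eta (A :&: [set w | [exists c in C, (hamming c w <= r)%N]]))
       (iota 0 n.+2).

(* marginal on coordinates 0..n-1 of the uniform Bernoulli measure on {0,1}^Z *)
Definition unif_marg (R : realType) (n : nat) : word n -> R :=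
  fun _ => (2%:R ^+ n)^-1.

(* R_eps(X, Y, mu) = liminf_n (1/n) R_eps(B_n(X), B_n(Y), mu_n),
   mu given by its family of marginals mu_n *)
Definition Reps (R : realType) (eps : R) (X Y : bseq -> Prop)
    (mu : forall n : nat, word n -> R) : \bar R :=
  limn_einf (fun n : nat =>
     ((Reps_fin eps (lang X n) (lang Y n) (mu n))%:R / n%:R)%:E).

From HB Require Import structures.
From mathcomp Require Import all_boot all_order all_algebra.
From mathcomp Require Import all_classical all_reals all_analysis.
From mathcomp Require Import zify ring lra.
Import Order.TTheory GRing.Theory Num.Theory.
Import numFieldNormedType.Exports.
Local Open Scope ring_scope.
Set Implicit Arguments. Unset Strict Implicit.

(* Greedy correction, which flips a 0 into a 1 exactly when it would complete
   a run of k+1 zeros, is an optimal way to move a word into B_n(X_{0,k}); so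
   the measure of the r-neighbourhood of B_n(X_{0,k}) is the proportion of
   words that greedy corrects with at most r flips.  With A = 2^(k+1) - 1 and
   t_m the current zero run, 2 A F_m + 2^(t_m+1) - 2 - m is a martingale in
   the number F_m of flips among the first m bits of a uniform word, with
   increments bounded by A; hence its second moment is at most n A^2 and, by
   Chebyshev, F_n / n concentrates at 1 / (2 A).  Hence
   R_eps(B_n(X_{0,k}), {0,1}^n, mu_n) / n tends to 1 / (2 A), for every
   0 < eps < 1. *)

Lemma sum_odd_involution (R : numDomainType) (T : finType) (s : T -> T) (G : T -> R) :
  involutive s -> (forall x, G (s x) = - G x) -> \sum_x G x = 0.
Proof.
move=> sK Gs; have sum_opp : \sum_x G x = - \sum_x G x.
  by rewrite {1}(reindex_inj (inv_inj sK)) -sumrN; apply: eq_bigr => x _; rewrite Gs.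
have : (\sum_x G x) *+ 2 == 0 by rewrite mulr2n {1}sum_opp addNr.
by rewrite mulrn_eq0 => /eqP.
Qed.

Lemma chebyshev_count (R : realDomainType) (T : finType) (f : T -> R) (lam : R) :
  0 <= lam -> #|[set x | lam <= `|f x|]|%:R * lam ^+ 2 <= \sum_x f x ^+ 2.
Proof.
move=> lam_ge0; rewrite (bigID [in [set x | lam <= `|f x|]]) /=.
rewrite -[X in X <= _]addr0 lerD ?sumr_ge0 // => [|x _]; last exact: sqr_ge0.
rewrite mulr_natl -sumr_const; apply: ler_sum => x; rewrite inE => le_lam.
by rewrite -[f x ^+ 2]real_normK ?num_real // lerXn2r // nnegrE.
Qed.

Lemma find_iota_bounds (R : realDomainType) (P : pred nat) N (lo hi : R) :
  has P (iota 0 N) -> 0 <= hi ->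
  (forall r, r%:R < lo -> ~~ P r) -> (forall r, hi <= r%:R -> P r) ->
  lo <= (find P (iota 0 N))%:R <= hi + 1.
Proof.
move=> hasP hi_ge0 below above.
have lt_fN : (find P (iota 0 N) < N)%N by rewrite -[X in (_ < X)%N](size_iota 0 N) -has_find.
have Pf : P (find P (iota 0 N)) by have := nth_find 0 hasP; rewrite nth_iota.
apply/andP; split; first by rewrite leNgt; apply/negP => /below; rewrite Pf.
have := @before_find _ 0 P (iota 0 N).
case: (find P (iota 0 N)) lt_fN => [|f] lt_fN before; first lra.
have := before f (ltnSn f); rewrite nth_iota ?(ltn_trans (ltnSn f)) // add0n.
by apply: contraFT => /negP; rewrite -natr1 => not_le; apply: above; lra.
Qed.

Section NearInfty.
Local Open Scope classical_set_scope.

Lemma near_inv_mulr_lt (R : archiRealFieldType) (x y : R) : 0 < x -> 0 < y ->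
  \forall n \near \oo, (x * n%:R)^-1 < y.
Proof.
move=> x_gt0 y_gt0; near=> n.
have n_gt : (x * y)^-1 < n%:R by near: n; apply: nbhs_infty_gtr.
have n_gt0 : 0 < (n%:R : R) by apply: le_lt_trans n_gt; rewrite invr_ge0 ltW ?mulr_gt0.
rewrite -div1r ltr_pdivrMr ?mulr_gt0 //.
by move: n_gt; rewrite -div1r ltr_pdivrMr ?mulr_gt0 //; lra.
Unshelve. all: by end_near.
Qed.

End NearInfty.

(* The greedy state after reading [m] bits of [g] is the pair (length of the
   current zero run of the corrected sequence, number of flips so far). *)
Definition greedy_step (k : nat) (s : nat * nat) (b : bool) : nat * nat :=
  if b then (0, s.2)%N
  else if s.1 == k then (0, s.2.+1)%N else (s.1.+1, s.2).

Fixpoint greedy (k : nat) (g : nat -> bool) (m : nat) : nat * nat :=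
  if m is m'.+1 then greedy_step k (greedy k g m') (g m') else (0, 0)%N.

Fixpoint zero_suffix (g : nat -> bool) (m : nat) : nat :=
  if m is m'.+1 then (if g m' then 0 else (zero_suffix g m').+1)%N else 0%N.

Section Greedy.
Variable k : nat.
Implicit Types (g h : nat -> bool) (m : nat).

Lemma greedy_tail_le g m : ((greedy k g m).1 <= k)%N.
Proof.
elim: m => //= m IH; rewrite /greedy_step.
by case: (g m) => //; case: eqP => //= ?; lia.
Qed.

Lemma greedy_flips_le g m : ((greedy k g m).2 <= m)%N.
Proof.
elim: m => //= m IH; rewrite /greedy_step.
by case: (g m) => /=; [lia | case: eqP => /= _; lia].
Qed.

Lemma eq_greedy g g' m :
  (forall i, (i < m)%N -> g i = g' i) -> greedy k g m = greedy k g' m.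
Proof.
elim: m => //= m IH eq_g.
by rewrite eq_g // IH // => i lt_im; apply: eq_g; lia.
Qed.

Lemma greedy_flipsE g m :
  (greedy k g m).2 = (\sum_(i < m) (~~ g i && ((greedy k g i).1 == k)))%N.
Proof.
elim: m => [|m IH]; first by rewrite big_ord0.
rewrite big_ord_recr /= -IH /greedy_step.
by case: (g m) => /=; [lia | case: eqP => /= _; lia].
Qed.

Lemma greedy_tailE g m :
  (greedy k g m).1 = zero_suffix (fun i => g i || ((greedy k g i).1 == k)) m.
Proof.
elim: m => //= m <-; rewrite /greedy_step.
by case: (g m) => //=; case: eqP.
Qed.

Lemma zero_suffix_le g m : (zero_suffix g m <= m)%N.
Proof. by elim: m => //= m IH; case: (g m). Qed.

Lemma eq_zero_suffix g g' m :
  (forall i, (i < m)%N -> g i = g' i) -> zero_suffix g m = zero_suffix g' m.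
Proof.
elim: m => //= m IH eq_g.
by rewrite eq_g // IH // => i lt_im; apply: eq_g; lia.
Qed.

Lemma zero_suffix_zero g m j : (j < zero_suffix g m)%N -> g (m - j.+1)%N = false.
Proof.
elim: m j => //= m IH [|j]; case g_m: (g m) => //= lt_j.
- by rewrite subn1.
- by rewrite subSS; apply: IH.
Qed.

Lemma zero_suffix_ge g m l : (l <= m)%N ->
  (forall j, (j < l)%N -> g (m - j.+1)%N = false) -> (l <= zero_suffix g m)%N.
Proof.
elim: m l => [|m IH] [|l] //= le_lm zeros.
have -> : g m = false by have := zeros 0%N isT; rewrite subn1.
apply: IH => // j lt_jl; by have := zeros j.+1 lt_jl; rewrite subSS.
Qed.

(* The indicator strengthens the induction: the zero run of greedy can exceed
   that of [h] only while its flip count is strictly below the distance. *)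
Lemma greedy_optimal g h m : (forall i, (i <= m)%N -> (zero_suffix h i <= k)%N) ->
  ((greedy k g m).2 + (zero_suffix h m < (greedy k g m).1)%N <=
   \sum_(i < m) (h i != g i))%N.
Proof.
elim: m => [|m IH] h_rll; first by rewrite big_ord0.
rewrite big_ord_recr /=.
have := IH (fun i le_im => h_rll i (leqW le_im)); have := h_rll m.+1 (leqnn _).
have := greedy_tail_le g m; rewrite /= /greedy_step.
case: (greedy k g m) => t f /=.
by case: (g m); case: (h m) => /=; try lia; case: eqP => /= ?; lia.
Qed.

End Greedy.

Definition wnth n (w : word n) (i : nat) : bool :=
  if insub i is Some j then w j else false.

Lemma wnthE n (w : word n) (j : 'I_n) : wnth w j = w j.
Proof. by rewrite /wnth valK. Qed.

Lemma card_word n : #|word n| = (2 ^ n)%N.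
Proof. by rewrite card_ffun card_bool card_ord. Qed.

Section Words.
Variables k n : nat.
Implicit Types (w c : word n).

Definition correct w : word n := [ffun j => w j || ((greedy k (wnth w) j).1 == k)].

Definition flips w : nat := (greedy k (wnth w) n).2.

Lemma wnth_correct w i : (i < n)%N ->
  wnth (correct w) i = wnth w i || ((greedy k (wnth w) i).1 == k).
Proof. by move=> lt_in; rewrite -[i]/(val (Ordinal lt_in)) !wnthE ffunE. Qed.

Lemma hamming_correct w : hamming (correct w) w = flips w.
Proof.
rewrite /hamming /flips greedy_flipsE; apply: eq_bigr => i _.
by rewrite ffunE wnthE; case: (w i); case: (_ == k).
Qed.

Lemma in_lang_rll c :
  c \in lang (rll0k k) n <-> forall m, (m <= n)%N -> (zero_suffix (wnth c) m <= k)%N.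
Proof.
rewrite inE; split.
- move=> /asboolP [x [x_rll [i0 c_x]]] m le_mn; rewrite leqNgt; apply/negP => long.
  have le_sm := zero_suffix_le (wnth c) m.
  have [j [le_jk x_j]] := x_rll (i0 + (m - k.+1)%N%:Z).
  have lt_pn : (m - (k - j).+1 < n)%N by lia.
  have := zero_suffix_zero (leq_ltn_trans (leq_subr j k) long).
  have -> : (m - (k - j).+1)%N = Ordinal lt_pn by [].
  rewrite wnthE c_x /= -addrA -PoszD in x_j *.
  have -> : (m - (k - j).+1)%N = (m - k.+1 + j)%N by lia.
  by rewrite x_j.
- move=> c_rll; apply/asboolP.
  pose x z := if z is Posz i then (n <= i)%N || wnth c i else true.
  exists x; split; last by exists 0 => j; rewrite add0r /x leqNgt ltn_ord wnthE.
  case=> [i|i]; last by exists 0%N; rewrite addr0.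
  apply: contrapT => no_one.
  have zero_at j : (j <= k)%N -> (i + j < n)%N /\ wnth c (i + j) = false.
    move=> le_jk; have : x (Posz i + j%:Z) <> true by move=> x_j; apply: no_one; exists j.
    by rewrite -PoszD /x; case: leqP => //= _; case: wnth.
  have [lt_ikn _] := zero_at k (leqnn k); rewrite -addnS in lt_ikn.
  apply/negP: (c_rll _ lt_ikn); rewrite -ltnNge.
  apply: zero_suffix_ge => [|j lt_jk]; first lia.
  have [_] := zero_at (k - j)%N (leq_subr _ _).
  by have -> : (i + k.+1 - j.+1 = i + (k - j))%N by lia.
Qed.

Lemma correct_in_lang w : correct w \in lang (rll0k k) n.
Proof.
apply/in_lang_rll => m le_mn.
rewrite (@eq_zero_suffix _ (fun i => wnth w i || ((greedy k (wnth w) i).1 == k))).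
  by rewrite -greedy_tailE greedy_tail_le.
by move=> i lt_im; rewrite wnth_correct //; apply: leq_trans le_mn.
Qed.

Lemma flips_le_hamming w c : c \in lang (rll0k k) n -> (flips w <= hamming c w)%N.
Proof.
move=> /in_lang_rll c_rll; have := greedy_optimal (wnth w) c_rll.
have -> : (\sum_(i < n) (wnth c i != wnth w i))%N = hamming c w.
  by apply: eq_bigr => i _; rewrite !wnthE.
rewrite /flips; lia.
Qed.

Lemma lang_fullshift : lang fullshift n = [set: word n].
Proof.
apply/setP => w; rewrite !inE; apply/asboolP.
by exists (fun z => if z is Posz i then wnth w i else false); split=> //; exists 0 => j; rewrite add0r wnthE.
Qed.

Lemma rll_neighbourhoodE r :
  lang fullshift n :&: [set w | [exists c in lang (rll0k k) n, (hamming c w <= r)%N]]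
  = [set w | (flips w <= r)%N].
Proof.
rewrite lang_fullshift finset.setTI; apply/setP => w; rewrite !inE.
apply/existsP/idP => [[c /andP [c_rll le_r]]|le_r].
  exact: leq_trans (flips_le_hamming w c_rll) le_r.
by exists (correct w); rewrite correct_in_lang hamming_correct.
Qed.

End Words.

Definition wflip n (m : nat) (w : word n) : word n := [ffun j => (val j == m) (+) w j].

Lemma wflipK n m : involutive (@wflip n m).
Proof. by move=> w; apply/ffunP => j; rewrite !ffunE addbA addbb. Qed.

Lemma wnth_wflip n m (w : word n) i : (i < n)%N -> wnth (wflip m w) i = (i == m) (+) wnth w i.
Proof. by move=> lt_in; have -> : i = Ordinal lt_in by []; rewrite !wnthE ffunE. Qed.

Section Martingale.
Variables (R : realFieldType) (k : nat).
Local Notation A := (2 ^+ k.+1 - 1 : R).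

Lemma expr2S_sub1_gt0 : 0 < A.
Proof. by rewrite subr_gt0 exprn_egt1 ?ltr1n. Qed.

Definition greedy_incr (t : nat) (b : bool) : R := (-1) ^+ b * (2 ^+ t.+1 - 1).

(* Renewal martingale: a flip occurs on average every [2 * A] bits, the
   expected waiting time for [k.+1] zeros, and [2 ^+ t.+1 - 2] is the part of
   that time already saved by a current zero run of length [t]. *)
Definition greedy_mart (g : nat -> bool) (m : nat) : R :=
  2 * A * (greedy k g m).2%:R + 2 ^+ (greedy k g m).1.+1 - 2 - m%:R.

Lemma greedy_martS g m :
  greedy_mart g m.+1 = greedy_mart g m + greedy_incr (greedy k g m).1 (g m).
Proof.
rewrite /greedy_mart /greedy_incr /= /greedy_step.
case: (greedy k g m) => t f /=; rewrite -!natr1.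
by case: (g m) => /=; last case: eqP => [->|_] /=; rewrite ?exprS; ring.
Qed.

Lemma greedy_incr_sqr_le t b : (t <= k)%N -> greedy_incr t b ^+ 2 <= A ^+ 2.
Proof.
move=> le_tk; rewrite exprMn sqrr_sign mul1r.
have pow_ge1 : (1 : R) <= 2 ^+ t.+1 by rewrite exprn_ege1 // ler1n.
have le_pow : (2 : R) ^+ t.+1 <= 2 ^+ k.+1 by rewrite ler_eXn2l ?ltr1n.
by rewrite lerXn2r ?nnegrE; lra.
Qed.

Lemma sum_greedy_mart_sqr_le n m : (m <= n)%N ->
  \sum_(w : word n) greedy_mart (wnth w) m ^+ 2 <= m%:R * A ^+ 2 * 2 ^+ n.
Proof.
elim: m => [|m IH] lt_mn.
  rewrite big1 ?mul0r // => w _.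
  by rewrite /greedy_mart /= mulr0 add0r expr1 subrr sub0r oppr0 expr0n.
have cross : \sum_(w : word n)
    greedy_mart (wnth w) m * greedy_incr (greedy k (wnth w) m).1 (wnth w m) = 0.
  apply: (sum_odd_involution (wflipK m)) => w; rewrite wnth_wflip // eqxx.
  rewrite /greedy_mart (@eq_greedy _ _ (wnth w)) => [|i lt_im]; last first.
    by rewrite wnth_wflip ?(ltn_trans lt_im) // ltn_eqF.
  by rewrite /greedy_incr; case: (wnth w m); rewrite /= ?expr0 ?expr1; ring.
under eq_bigr => w _ do rewrite greedy_martS sqrrD.
rewrite !big_split /= cross !addr0.
have incr_le : \sum_(w : word n) greedy_incr (greedy k (wnth w) m).1 (wnth w m) ^+ 2
    <= A ^+ 2 * 2 ^+ n.
  apply: le_trans (ler_sum _ (fun w _ => greedy_incr_sqr_le _ (greedy_tail_le _ _ _))) _.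
  by rewrite sumr_const card_word -[_ *+ (2 ^ n)%N]mulr_natr natrX.
have := IH (ltnW lt_mn); rewrite -natr1; lra.
Qed.

Lemma flips_dev_le n (w : word n) :
  `|2 * A * (flips k w)%:R - n%:R| <= `|greedy_mart (wnth w) n| + A.
Proof.
set t := (greedy k (wnth w) n).1.
have -> : 2 * A * (flips k w)%:R - n%:R = greedy_mart (wnth w) n - (2 ^+ t.+1 - 2).
  by rewrite /greedy_mart /flips; ring.
have pow_ge2 : (2 : R) <= 2 ^+ t.+1 by rewrite exprS ler_peMr ?exprn_ege1 ?ler1n.
have pow_le : (2 : R) ^+ t.+1 <= 2 ^+ k.+1 by rewrite ler_eXn2l ?ltr1n ?ltnS ?greedy_tail_le.
apply: le_trans (ler_normB _ _) _; rewrite lerD2l ger0_norm; lra.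
Qed.

Lemma flips_concentration n (del : R) : 0 < del -> 1 <= del * n%:R ->
  #|[set w : word n | del * n%:R <= `|(flips k w)%:R - (2 * A)^-1 * n%:R|]|%:R
    <= 2 ^+ n / (del ^+ 2 * n%:R).
Proof.
move=> del_gt0 deln_ge1; have A_gt0 := expr2S_sub1_gt0.
have n_gt0 : 0 < (n%:R : R) by rewrite -(pmulr_rgt0 _ del_gt0); lra.
set S := [set w | _ <= _]; set S' := [set w : word n | A * del * n%:R <= `|greedy_mart (wnth w) n|].
have le_SS' : (#|S|%:R : R) <= #|S'|%:R.
  rewrite ler_nat subset_leq_card //; apply/fintype.subsetP => w; rewrite !inE => dev.
  have := flips_dev_le w.
  have -> : 2 * A * (flips k w)%:R - n%:R = 2 * A * ((flips k w)%:R - (2 * A)^-1 * n%:R).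
    by field; lra.
  rewrite normrM ger0_norm; last lra.
  have : A <= A * (del * n%:R) by rewrite ler_peMr //; lra.
  have : 2 * A * (del * n%:R) <= 2 * A * `|(flips k w)%:R - (2 * A)^-1 * n%:R|.
    by rewrite ler_pM2l //; lra.
  lra.
have lam_ge0 : 0 <= A * del * n%:R by rewrite !mulr_ge0 //; lra.
have := chebyshev_count (fun w : word n => greedy_mart (wnth w) n) lam_ge0.
rewrite -/S' => /le_trans /(_ (sum_greedy_mart_sqr_le (leqnn n))).
rewrite ler_pdivlMr ?mulr_gt0 ?exprn_gt0 // => cheb.
rewrite -(@ler_pM2l _ (n%:R * A ^+ 2)) ?mulr_gt0 ?exprn_gt0 //.
apply: le_trans cheb; rewrite [X in X <= _](_ : _ = #|S|%:R * (A * del * n%:R) ^+ 2).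
  by rewrite ler_wpM2r ?sqr_ge0.
by ring.
Qed.

End Martingale.

Section RLLDistortion.
Variables (R : realType) (k : nat).
Local Notation c := ((2 * (2 ^+ k.+1 - 1))^-1 : R).

Lemma Reps_fin_rll_unif n (eps : R) :
  Reps_fin eps (lang (rll0k k) n) (lang fullshift n) (unif_marg R (n:=n)) =
  find (fun r => 1 - eps <= #|[set w : word n | (flips k w <= r)%N]|%:R / 2 ^+ n)
    (iota 0 n.+2).
Proof.
apply: eq_find => r; rewrite /wmeas /unif_marg rll_neighbourhoodE sumr_const.
by rewrite -[_ *+ #|_|]mulr_natl.
Qed.

Lemma Reps_fin_rll_unif_bounds n (eps del : R) : 0 < del -> 1 <= del * n%:R ->
  (del ^+ 2 * n%:R)^-1 <= eps < 1 - (del ^+ 2 * n%:R)^-1 ->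
  (c - del) * n%:R <= (Reps_fin eps (lang (rll0k k) n) (lang fullshift n) (unif_marg R (n:=n)))%:R
    <= (c + del) * n%:R + 1.
Proof.
move=> del_gt0 deln_ge1 /andP [q_le_eps eps_lt].
have conc := flips_concentration k del_gt0 deln_ge1.
set q := (del ^+ 2 * n%:R)^-1 in q_le_eps eps_lt conc.
set D := [set w | _ <= _] in conc.
have pow_gt0 : (0 : R) < 2 ^+ n by rewrite exprn_gt0.
rewrite Reps_fin_rll_unif; apply: find_iota_bounds.
- apply/hasP; exists n; first by rewrite mem_iota add0n ltnS leqnSn.
  have -> : [set w : word n | (flips k w <= n)%N] = [set: word n]%SET.
    by apply/setP => w; rewrite !inE greedy_flips_le.
  have q_ge0 : 0 <= q by rewrite invr_ge0 mulr_ge0 ?sqr_ge0.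
  by rewrite cardsT card_word natrX divff ?gt_eqF //; lra.
- have c_gt0 : 0 < c by rewrite invr_gt0 mulr_gt0 // (expr2S_sub1_gt0 R k).
  by rewrite mulr_ge0 // addr_ge0 // ltW.
- move=> r lt_r; rewrite -ltNge ltr_pdivrMr //.
  have : #|[set w : word n | (flips k w <= r)%N]|%:R <= #|D|%:R :> R.
    rewrite ler_nat subset_leq_card //; apply/fintype.subsetP => w; rewrite !inE => le_fr.
    rewrite ler_normr; apply/orP; right.
    have : (flips k w)%:R <= r%:R :> R by rewrite ler_nat.
    lra.
  have : 2 ^+ n * q < (1 - eps) * 2 ^+ n by rewrite mulrC ltr_pM2r //; lra.
  lra.
- move=> r le_r; rewrite ler_pdivlMr //.
  have : #|~: [set w : word n | (flips k w <= r)%N]|%:R <= #|D|%:R :> R.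
    rewrite ler_nat subset_leq_card //; apply/fintype.subsetP => w; rewrite !inE -ltnNge => lt_rf.
    rewrite ler_normr; apply/orP; left.
    have : r%:R + 1 <= (flips k w)%:R :> R by rewrite natr1 ler_nat.
    lra.
  have := cardsC [set w : word n | (flips k w <= r)%N].
  rewrite card_word => /(congr1 (fun m => m%:R : R)); rewrite natrD natrX.
  have : 2 ^+ n * q <= eps * 2 ^+ n by rewrite mulrC ler_pM2r.
  lra.
Qed.

Local Open Scope classical_set_scope.

Lemma Reps_fin_rll_unif_cvg (eps : R) : 0 < eps < 1 ->
  (fun n => (Reps_fin eps (lang (rll0k k) n) (lang fullshift n) (unif_marg R (n:=n)))%:R / n%:R)
    @ \oo --> c.
Proof.
move=> /andP [eps_gt0 eps_lt1]; apply/cvgrPdist_le => d d_gt0.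
set del := d / 2; have del_gt0 : 0 < del by rewrite divr_gt0.
have del2_gt0 : 0 < del ^+ 2 by rewrite exprn_gt0.
near=> n.
have inv_deln_lt1 : (del * n%:R)^-1 < 1 by near: n; apply: near_inv_mulr_lt.
have q_lt_eps : (del ^+ 2 * n%:R)^-1 < eps by near: n; apply: near_inv_mulr_lt.
have q_lt_1_eps : (del ^+ 2 * n%:R)^-1 < 1 - eps.
  by near: n; apply: near_inv_mulr_lt; rewrite // subr_gt0.
have n_gt0 : 0 < (n%:R : R) by near: n; apply: nbhs_infty_gtr.
have deln_ge1 : 1 <= del * n%:R by rewrite ltW // -invf_lt1 ?mulr_gt0.
have eps_mid : (del ^+ 2 * n%:R)^-1 <= eps < 1 - (del ^+ 2 * n%:R)^-1.
  by apply/andP; split; lra.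
have /andP [lo hi] := Reps_fin_rll_unif_bounds del_gt0 deln_ge1 eps_mid.
have d_eq : d = del + del by rewrite /del -splitr.
rewrite ler_distlC ler_pdivlMr // ler_pdivrMr // d_eq.
apply/andP; split; lra.
Unshelve. all: by end_near.
Qed.

Lemma Reps_rll_unif (eps : R) : 0 < eps < 1 ->
  Reps eps (rll0k k) fullshift (@unif_marg R) = c%:E.
Proof.
move=> /Reps_fin_rll_unif_cvg cvg_Reps; rewrite /Reps.
suff cvgE : (fun n => ((Reps_fin eps (lang (rll0k k) n)
    (lang fullshift n) (unif_marg R (n:=n)))%:R / n%:R)%:E) @ \oo --> c%:E.
  by have [-> _] := cvg_limn_einf_sup cvgE.
by apply: cvg_EFin cvg_Reps; near=> n.
Unshelve. all: by end_near.
Qed.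

End RLLDistortion.

Local Open Scope classical_set_scope.

Theorem theorem19 (R : realType) (k : nat) :
  Reps x (rll0k k) fullshift (@unif_marg R) @[x --> (0 : R)^'+] --> ((2 * (2 ^+ k.+1 - 1))^-1 : R)%:E.
Proof.
apply: cvg_near_cst; near=> eps; apply: Reps_rll_unif; apply/andP; split.
- by near: eps; apply: nbhs_right_gt.
- by near: eps; apply: nbhs_right_lt; apply: ltr01.
Unshelve. all: by end_near.
Qed.
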